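(* Let $K=(C,\langle Q_i,1\le i\le k\rangle)$ be a CMI in pure form, let $\mathbb I_K$ be its set of repeated indices, and let $P_j=Q_{i_j}\setminus\mathbb I_K$, $1\le j\le t$ (with $1\le i_1\le\dots\le i_t\le k$), be the nonempty sets among the $Q_i\setminus\mathbb I_K$. Then, for a given joint distribution of $X_1,\dots,X_n$, $K$ is valid if and only if both $(C,\langle\mathbb I_K,\mathbb I_K\rangle)$ and $(C,\langle P_i,1\le i\le t\rangle)$ are valid.
   Context: $X_1,\dots,X_n$ are jointly distributed discrete random variables with $H(X_i)<\infty$; $X_\alpha=(X_i,i\in\alpha)$, $X_\emptyset$ is a constant. A CMI $(C,\langle Q_1,\dots,Q_k\rangle)$, $k\ge0$, with $C\subseteq\{1,\dots,n\}$ and an unordered multiset of subsets $Q_i$, is valid for a given distribution if $\sum_{i=1}^kH(X_{Q_i}|X_C)-H(X_{Q_1},\dots,X_{Q_k}|X_C)=0$ (automatically when $k\le1$); empty members may be deleted. Thus $(C,\langle A,A\rangle)$ is valid iff $H(X_A|X_C)=0$. Pure form: all $Q_i\ne\emptyset$ and $Q_i\cap C=\emptyset$. Repeated indices: if $k\ge2$, $\mathbb I_K$ is the set of indices lying in at least two members (distinct positions) of the collection; $\mathbb I_K=\emptyset$ if $k\le1$. *)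

From mathcomp Require Import all_boot all_order all_algebra.
From mathcomp Require Import all_classical all_reals all_analysis.
Set Implicit Arguments. Unset Strict Implicit. Unset Printing Implicit Defensive.
Import Order.TTheory GRing.Theory Num.Theory.
Local Open Scope classical_set_scope.
Local Open Scope ring_scope.

(* Joint outcomes of X_1..X_n: each X_i takes values in a countable alphabet,
   encoded into nat.  A joint distribution is a pmf on {ffun 'I_n -> nat}. *)
Definition outcome (n : nat) := {ffun 'I_n -> nat}.

Definition is_pmf (R : realType) (n : nat) (p : outcome n -> R) : Prop :=
  (forall x, 0 <= p x) /\ (\esum_(x in [set: outcome n]) (p x)%:E = 1)%E.

(* X_A as a function of the joint outcome (coordinates outside A set to 0). *)
Definition proj (n : nat) (A : {set 'I_n}) (x : outcome n) : outcome n :=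
  [ffun i => if i \in A then x i else 0%N].

Definition marg (R : realType) (n : nat) (p : outcome n -> R) (A : {set 'I_n})
  (v : outcome n) : \bar R :=
  \esum_(x in [set x | proj A x = v]) (p x)%:E.

Definition entropy (R : realType) (n : nat) (p : outcome n -> R) (A : {set 'I_n})
  : \bar R :=
  \esum_(v in [set: outcome n])
    (let r := fine (marg p A v) in (- (r * ln r))%:E).

(* H(X_A | X_C) = H(X_{A u C}) - H(X_C) (all entropies are finite here). *)
Definition condent (R : realType) (n : nat) (p : outcome n -> R) (A C : {set 'I_n})
  : \bar R := (entropy p (A :|: C) - entropy p C)%E.

(* A CMI (C, <Q_1,...,Q_k>) with the multiset given as a list. *)
Definition cmi_valid (R : realType) (n : nat) (p : outcome n -> R) (C : {set 'I_n})
  (Qs : seq {set 'I_n}) : Prop :=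
  (\sum_(Q <- Qs) condent p Q C - condent p (\bigcup_(Q <- Qs) Q) C = 0)%E.

Definition pure_form (n : nat) (C : {set 'I_n}) (Qs : seq {set 'I_n}) : Prop :=
  forall Q, Q \in Qs -> Q != finset.set0 /\ Q :&: C = finset.set0.

Definition repeated (n : nat) (Qs : seq {set 'I_n}) : {set 'I_n} :=
  [set i : 'I_n | (1 < count (fun Q : {set 'I_n} => i \in Q) Qs)%N].

Definition reduced_parts (n : nat) (Qs : seq {set 'I_n}) : seq {set 'I_n} :=
  [seq P <- [seq Q :\: repeated Qs | Q <- Qs] | P != finset.set0].

From Pilot Require Import Defs.
From mathcomp Require Import all_boot all_order all_algebra.
From mathcomp Require Import all_classical all_reals all_analysis.
From mathcomp Require Import ring lra.
Set Implicit Arguments. Unset Strict Implicit. Unset Printing Implicit Defensive.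
Import Order.TTheory GRing.Theory Num.Theory.
Local Open Scope classical_set_scope.
Local Open Scope ring_scope.

(* Entropy is finite, monotone and submodular, so for fixed C the conditional
   entropy h(A) = H(X_(A u C) | X_C) is a polymatroid.  For a polymatroid the
   defect sum_i h(Q_i) - h(U_i Q_i) of a family is at least h(I_K): adding Q to
   a family whose union is U costs h(Q) + h(U) - h(Q u U) >= h(Q n U), and the
   repeated indices grow by exactly Q n U.  Hence validity of K forces
   h(I_K) = 0, and once h(I_K) = 0 the function h no longer sees I_K, so the
   defect of K equals that of the P_j.  Submodularity of entropy itself comes
   from ln t <= t - 1 applied pointwise to
   t = p(x_S) p(x_T) / (p(x_(S u T)) p(x_(S n T))), whose expectation is the
   total mass of the law making X_S and X_T independent given X_(S n T),
   hence at most 1. *)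

(* Plain [proj] resolves to mathcomp_extra's projection once analysis is loaded. *)
Local Notation prj := Defs.proj.

Section ExtendedSums.
Variables (R : realType) (T : choiceType).
Local Open Scope ereal_scope.

Lemma esumZl (I : set T) (c : R) (a : T -> \bar R) : (0 <= c)%R ->
  (forall i, 0 <= a i) ->
  \esum_(i in I) (c%:E * a i) = c%:E * \esum_(i in I) a i.
Proof.
move=> c0 a0; rewrite /esum -ereal_supZl //; last first.
  apply/set0P; exists 0; exists set0; [exact: fsets_set0 | by rewrite fsbig_set0].
congr ereal_sup; apply/seteqP; split => x /=.
- move=> [A [finA AI] <-]; exists (\sum_(i \in A) a i); first by exists A.
  by rewrite !fsbig_finite // ge0_sume_distrr.
- move=> [y [A [finA AI] <-] <-]; exists A => //.
  by rewrite !fsbig_finite // ge0_sume_distrr.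
Qed.

Lemma esum_fibers (U : choiceType) (f : T -> \bar R) (pi : T -> U) :
  (forall x, 0 <= f x) ->
  \esum_(x in [set: T]) f x =
  \esum_(v in [set: U]) \esum_(x in [set x | pi x = v]) f x.
Proof.
move=> f0; rewrite esum_esum //.
rewrite (reindex_esum [set: T] _ (fun x => (pi x, x))) //.
split.
- by move=> x _ /=.
- by move=> x y _ _ /= [_ ->].
- by move=> [v x] /= [_ <-]; exists x.
Qed.

Lemma exchange_esum (U : choiceType) (f : T -> U -> \bar R) :
  (forall x y, 0 <= f x y) ->
  \esum_(x in [set: T]) \esum_(y in [set: U]) f x y =
  \esum_(y in [set: U]) \esum_(x in [set: T]) f x y.
Proof.
move=> f0; rewrite !esum_esum //.
rewrite (reindex_esum ([set: U] `*`` fun=> [set: T]) _ (fun k => (k.2, k.1))) //.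
split => //.
- by move=> [a b] [c d] _ _ /= [-> ->].
- by move=> [a b] _; exists (b, a).
Qed.

Lemma esum_support1 (f : T -> \bar R) (g : T) :
  (forall x, x != g -> f x = 0) -> 0 <= f g ->
  \esum_(x in [set: T]) f x = f g.
Proof.
move=> fz f0; rewrite -(esum_set1 f0) [RHS]esum_mkcond; apply: eq_esum => x _.
case: ifPn; first by rewrite inE => ->.
by move=> H; apply: fz; apply: contra H => /eqP ->; rewrite inE.
Qed.

End ExtendedSums.

Section Entropy.
Variables (R : realType) (n : nat) (p : outcome n -> R).
Hypothesis hp : is_pmf p.
Implicit Types (A B C S T U W : {set 'I_n}) (x y z v : outcome n).

Let p_ge0 x : 0 <= p x. Proof. exact: hp.1. Qed.
Let esum_p : (\esum_(x in [set: outcome n]) (p x)%:E = 1)%E.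
Proof. exact: hp.2. Qed.

Lemma proj_proj S T x : prj S (prj T x) = prj (S :&: T) x.
Proof.
apply/ffunP => i; rewrite !ffunE inE.
by case: (i \in S) => //=; rewrite ffunE.
Qed.

Lemma proj_proj_sub S T x : S \subset T -> prj S (prj T x) = prj S x.
Proof. by move=> /finset.setIidPl ST; rewrite proj_proj ST. Qed.

Lemma margE S v : marg p S v =
  (\esum_(y in [set: outcome n]) (if prj S y == v then p y else 0)%:E)%E.
Proof.
rewrite /marg esum_mkcond; apply: eq_esum => y _.
case: ifPn => [/set_mem /= ->|]; first by rewrite eqxx.
move=> /negP H; case: eqP => // E; exfalso; apply: H; exact: mem_set.
Qed.

Lemma marg_ge0 S v : (0 <= marg p S v)%E.
Proof. by apply: esum_ge0 => x _; rewrite lee_fin. Qed.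

Lemma marg_le1 S v : (marg p S v <= 1)%E.
Proof.
rewrite margE -esum_p; apply: le_esum => x _; rewrite lee_fin.
by case: ifP.
Qed.

Lemma marg_fin_num S v : marg p S v \is a fin_num.
Proof.
rewrite ge0_fin_numE ?marg_ge0 //; exact: le_lt_trans (marg_le1 S v) (ltry _).
Qed.

Lemma marg_eq0 U v : prj U v != v -> marg p U v = 0%E.
Proof.
move=> Uv; rewrite /marg; apply: esum1 => x /= E.
by move: Uv; rewrite -E proj_proj_sub ?subxx ?eqxx.
Qed.

Definition pmarg S x : R := fine (marg p S (prj S x)).

Lemma pmargE S x : (pmarg S x)%:E = marg p S (prj S x).
Proof. by rewrite /pmarg fineK // marg_fin_num. Qed.

Lemma pmarg_le1 S x : pmarg S x <= 1.
Proof. by rewrite -lee_fin pmargE marg_le1. Qed.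

Lemma pmarg_ge S x : p x <= pmarg S x.
Proof.
rewrite -lee_fin pmargE /marg; apply: esum_ge; exists [set x].
  by split => // y /= ->.
by rewrite fsbig_set1.
Qed.

Lemma pmarg_ge0 S x : 0 <= pmarg S x.
Proof. exact: le_trans (p_ge0 x) (pmarg_ge S x). Qed.

Lemma pmarg_gt0 S x : 0 < p x -> 0 < pmarg S x.
Proof. by move=> px; apply: lt_le_trans px (pmarg_ge S x). Qed.

Lemma pmarg_proj S U x : S \subset U -> pmarg S (prj U x) = pmarg S x.
Proof. by move=> SU; rewrite /pmarg proj_proj_sub. Qed.

Lemma pmarg_leS S T x : S \subset T -> pmarg T x <= pmarg S x.
Proof.
move=> ST; rewrite -lee_fin !pmargE !margE; apply: le_esum => y _.
rewrite lee_fin; case: eqP => [E|_]; last by case: ifP.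
by rewrite -(proj_proj_sub y ST) E (proj_proj_sub x ST) eqxx.
Qed.

Lemma surprisal_ge0 S x : 0 <= p x * - ln (pmarg S x).
Proof. by rewrite mulr_ge0 // oppr_ge0 ln_le0 // pmarg_le1. Qed.

Lemma entropyE S : entropy p S =
  (\esum_(x in [set: outcome n]) (p x * - ln (pmarg S x))%:E)%E.
Proof.
rewrite (esum_fibers (prj S)); last by move=> x; rewrite lee_fin surprisal_ge0.
rewrite /entropy; apply: eq_esum => v _ /=.
transitivity (\esum_(x in [set x | prj S x = v])
   ((- ln (fine (marg p S v)))%:E * (p x)%:E))%E; last first.
  by apply: eq_esum => x /= <-; rewrite -EFinM mulrC.
rewrite esumZl; last by move=> x; rewrite lee_fin.
  by rewrite -[X in (_ * X)%E](@fineK _ (marg p S v)) ?marg_fin_num //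
    -EFinM mulNr mulrC.
by rewrite oppr_ge0 ln_le0 // -lee_fin fineK ?marg_fin_num ?marg_le1.
Qed.

Lemma entropy_ge0 S : (0 <= entropy p S)%E.
Proof. by rewrite entropyE; apply: esum_ge0 => x _; rewrite lee_fin surprisal_ge0. Qed.

Lemma entropy_set0 : entropy p finset.set0 = 0%E.
Proof.
rewrite entropyE; apply: esum1 => x _.
suff -> : pmarg finset.set0 x = 1 by rewrite ln1 oppr0 mulr0.
rewrite /pmarg margE (eq_esum (b := fun y => (p y)%:E)) ?esum_p //.
move=> y _; suff -> : prj finset.set0 y = prj finset.set0 x by rewrite eqxx.
by apply/ffunP => i; rewrite !ffunE finset.in_set0.
Qed.

Lemma le_entropy S T : S \subset T -> (entropy p S <= entropy p T)%E.
Proof.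
move=> ST; rewrite !entropyE; apply: le_esum => x _; rewrite lee_fin.
have [px0|pxn0] := eqVneq (p x) 0; first by rewrite px0 !mul0r.
have px : 0 < p x by rewrite lt0r pxn0 p_ge0.
by rewrite ler_wpM2l // lerN2 ler_ln ?posrE ?pmarg_gt0 ?pmarg_leS.
Qed.

Definition submod_ratio S T x :=
  pmarg S x * pmarg T x / (pmarg (S :|: T) x * pmarg (S :&: T) x).

Lemma submod_ratio_ge0 S T x : 0 <= submod_ratio S T x.
Proof. by rewrite /submod_ratio divr_ge0 ?mulr_ge0 ?pmarg_ge0. Qed.

Lemma surprisal_submod S T x :
  p x * - ln (pmarg (S :|: T) x) + p x * - ln (pmarg (S :&: T) x) + p x <=
  p x * - ln (pmarg S x) + p x * - ln (pmarg T x) + p x * submod_ratio S T x.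
Proof.
set t := submod_ratio S T x.
have [px0|pxn0] := eqVneq (p x) 0; first by rewrite px0 !mul0r !addr0.
have px : 0 < p x by rewrite lt0r pxn0 p_ge0.
have hS := pmarg_gt0 S px; have hT := pmarg_gt0 T px.
have hU := pmarg_gt0 (S :|: T) px; have hW := pmarg_gt0 (S :&: T) px.
have t_gt0 : 0 < t by rewrite /t divr_gt0 // mulr_gt0.
have lntE : ln t = ln (pmarg S x) + ln (pmarg T x) -
    (ln (pmarg (S :|: T) x) + ln (pmarg (S :&: T) x)).
  by rewrite /t ln_div ?posrE ?mulr_gt0 // !lnM ?posrE.
have ln_le : ln t <= t - 1.
  by have := @le_ln1Dx R (t - 1); rewrite addrCA subrr addr0; apply; lra.
rewrite lntE in ln_le; have := ler_wpM2l (ltW px) ln_le; nra.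
Qed.

Lemma esum_submod_ratio_le S T :
  (\esum_(x in [set: outcome n]) (p x * submod_ratio S T x)%:E <=
   \esum_(v in [set: outcome n]) (if prj (S :|: T) v == v
     then pmarg S v * pmarg T v / pmarg (S :&: T) v else 0)%:E)%E.
Proof.
set U := S :|: T; set W := S :&: T.
rewrite (esum_fibers (prj U)); last first.
  by move=> x; rewrite lee_fin mulr_ge0 ?submod_ratio_ge0.
apply: le_esum => v _.
have ratioE x : prj U x = v -> submod_ratio S T x = submod_ratio S T v.
  move=> <-; rewrite /submod_ratio !pmarg_proj //.
  all: try exact: finset.subsetUr; try exact: finset.subsetUl.
  by rewrite finset.subIset // finset.subsetUl.
rewrite (eq_esum (b := fun x => ((submod_ratio S T v)%:E * (p x)%:E)%E)); last first.
  by move=> x /= E; rewrite -EFinM mulrC (ratioE x E).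
rewrite esumZl; [|exact: submod_ratio_ge0|by move=> x; rewrite lee_fin].
rewrite -/(marg p U v).
case: eqP => [Uv|/eqP Uv]; last by rewrite marg_eq0 // mule0.
rewrite -[in marg p U v]Uv -pmargE -EFinM lee_fin /submod_ratio -/U -/W.
have [->|U0] := eqVneq (pmarg U v) 0.
  by rewrite mulr0 divr_ge0 ?mulr_ge0 ?pmarg_ge0.
by rewrite invfM [_^-1 * _^-1]mulrC !mulrA mulfVK ?lexx.
Qed.

Definition glue S T y z : outcome n :=
  [ffun i => if i \in S then y i else if i \in T then z i else 0%N].

Lemma glue_eq S T v y z : prj (S :|: T) v = v -> prj S y = prj S v ->
  prj T z = prj T v -> v = glue S T y z.
Proof.
move=> /ffunP eU /ffunP eS /ffunP eT; apply/ffunP => i.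
have := eU i; have := eS i; have := eT i; rewrite !ffunE !inE.
by case: (i \in S); case: (i \in T) => /= h1 h2 h3; rewrite ?h1 ?h2 -?h3.
Qed.

(* Summed over (y, z) this weight gives the conditionally independent mass of
   v; summed over v it collapses onto the single point [glue S T y z]. *)
Definition glue_weight S T v y z : \bar R :=
  (if [&& prj (S :|: T) v == v, prj S y == prj S v & prj T z == prj T v]
   then p y * p z / pmarg (S :&: T) v else 0)%:E.

Lemma glue_weight_ge0 S T v y z : (0 <= glue_weight S T v y z)%E.
Proof.
rewrite /glue_weight lee_fin; case: ifP => // _.
by rewrite divr_ge0 ?mulr_ge0 ?pmarg_ge0.
Qed.

Lemma esum_glue_weight S T v :
  (if prj (S :|: T) v == v then pmarg S v * pmarg T v / pmarg (S :&: T) v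
   else 0)%:E =
  \esum_(y in [set: outcome n]) \esum_(z in [set: outcome n]) glue_weight S T v y z.
Proof.
rewrite /glue_weight; case: (prj (S :|: T) v == v) => /=; last first.
  by rewrite esum1 // => y _; rewrite esum1.
set w := pmarg (S :&: T) v.
transitivity (\esum_(y in [set: outcome n])
  ((if prj S y == prj S v then p y / w else 0)%:E * marg p T (prj T v)))%E;
  last first.
  apply: eq_esum => y _; rewrite margE -esumZl; last 2 first.
  - by case: ifP => // _; rewrite divr_ge0 ?pmarg_ge0.
  - by move=> z; rewrite lee_fin; case: ifP.
  apply: eq_esum => z _; rewrite -EFinM.
  by case: (prj S y == prj S v); case: (prj T z == prj T v);
    rewrite /= ?mul0r ?mulr0 // mulrAC.
rewrite -pmargE.
transitivity (\esum_(y in [set: outcome n])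
  ((pmarg T v / w)%:E * (if prj S y == prj S v then p y else 0)%:E))%E; last first.
  apply: eq_esum => y _; rewrite -!EFinM.
  by congr (_%:E); case: (prj S y == prj S v); rewrite ?mulr0 ?mul0r //; ring.
rewrite esumZl; last 2 first.
- by rewrite divr_ge0 ?pmarg_ge0.
- by move=> y; rewrite lee_fin; case: ifP.
by rewrite -margE -pmargE -EFinM; congr (_%:E); ring.
Qed.

Lemma esum_glue_weight_le S T y z :
  (\esum_(v in [set: outcome n]) glue_weight S T v y z <=
   (if prj (S :&: T) z == prj (S :&: T) y
    then p y * p z / pmarg (S :&: T) y else 0)%:E)%E.
Proof.
set W := S :&: T; rewrite (@esum_support1 _ _ _ (glue S T y z)); last 2 first.
- move=> v vg; rewrite /glue_weight.
  case: ifP => // /and3P [/eqP h1 /eqP h2 /eqP h3].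
  by move: vg; rewrite -(glue_eq h1 h2 h3) eqxx.
- exact: glue_weight_ge0.
rewrite /glue_weight; case: ifP => [/and3P [_ /eqP h2 /eqP h3]|_]; last first.
  by rewrite lee_fin; case: ifP => // _; rewrite divr_ge0 ?mulr_ge0 ?pmarg_ge0.
have eWy : prj W y = prj W (glue S T y z).
  by rewrite -(proj_proj_sub y (finset.subsetIl S T)) h2 proj_proj_sub
    ?finset.subsetIl.
have eWz : prj W z = prj W (glue S T y z).
  by rewrite -(proj_proj_sub z (finset.subsetIr S T)) h3 proj_proj_sub
    ?finset.subsetIr.
by rewrite eWz eWy eqxx /pmarg eWy.
Qed.

Lemma esum_cond_indep_le1 S T : (\esum_(v in [set: outcome n])
    (if prj (S :|: T) v == v
     then pmarg S v * pmarg T v / pmarg (S :&: T) v else 0)%:E <= 1)%E.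
Proof.
set W := S :&: T.
under eq_esum do rewrite esum_glue_weight.
rewrite exchange_esum; last by move=> v y; apply: esum_ge0 => z _; exact: glue_weight_ge0.
rewrite (eq_esum (b := fun y => \esum_(z in [set: outcome n])
   \esum_(v in [set: outcome n]) glue_weight S T v y z)); last first.
  by move=> y _; rewrite exchange_esum // => v z; exact: glue_weight_ge0.
apply: le_trans (_ : \esum_(y in [set: outcome n]) \esum_(z in [set: outcome n])
   (if prj W z == prj W y then p y * p z / pmarg W y else 0)%:E <= 1)%E.
  by apply: le_esum => y _; apply: le_esum => z _; exact: esum_glue_weight_le.
rewrite -esum_p; apply: le_esum => y _.
rewrite (eq_esum (b := fun z =>
   ((p y / pmarg W y)%:E * (if prj W z == prj W y then p z else 0)%:E)%E)); last first.
  by move=> z _; rewrite -EFinM; congr (_%:E); case: ifP => _; [ring | rewrite mulr0].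
rewrite esumZl; last 2 first.
- by rewrite divr_ge0 ?pmarg_ge0.
- by move=> z; rewrite lee_fin; case: ifP.
rewrite -margE -pmargE -EFinM lee_fin.
have [->|m0] := eqVneq (pmarg W y) 0; first by rewrite mulr0.
by rewrite divfK.
Qed.

Lemma entropy_submod S T :
  (entropy p (S :|: T) + entropy p (S :&: T) <= entropy p S + entropy p T)%E.
Proof.
rewrite !entropyE.
have pointwise : (\esum_(x in [set: outcome n])
     ((p x * - ln (pmarg (S :|: T) x))%:E +
      (p x * - ln (pmarg (S :&: T) x))%:E + (p x)%:E) <=
   \esum_(x in [set: outcome n]) ((p x * - ln (pmarg S x))%:E +
      (p x * - ln (pmarg T x))%:E + (p x * submod_ratio S T x)%:E))%E.
  by apply: le_esum => x _; rewrite -!EFinD lee_fin; exact: surprisal_submod.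
rewrite esumD ?esumD ?esum_p in pointwise.
all: try by move=> x _; rewrite ?adde_ge0 ?lee_fin ?surprisal_ge0 ?p_ge0
  ?mulr_ge0 ?submod_ratio_ge0.
rewrite -(@leeD2rE _ 1) //; apply: (le_trans pointwise); apply: leeD2l.
exact: le_trans (esum_submod_ratio_le S T) (esum_cond_indep_le1 S T).
by move=> x _; rewrite lee_fin mulr_ge0 ?submod_ratio_ge0.
Qed.

Lemma entropy_subadd S T :
  (entropy p (S :|: T) <= entropy p S + entropy p T)%E.
Proof. by apply: le_trans (entropy_submod S T); apply: leeDl; exact: entropy_ge0. Qed.

Hypothesis hfin : forall i : 'I_n, (entropy p [set i] < +oo)%E.

Lemma entropy_fin_num A : entropy p A \is a fin_num.
Proof.
rewrite ge0_fin_numE ?entropy_ge0 //.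
elim: {A}_.+1 {-2}A (ltnSn #|A|) => // k IH A cardA.
have [->|[i iA]] := finset.set_0Vmem A; first by rewrite entropy_set0 ltry.
rewrite -(finset.setD1K iA); apply: le_lt_trans (entropy_subadd _ _) _.
apply: lte_add_pinfty; first exact: hfin.
by apply: IH; move: cardA; rewrite (finset.cardsD1 i A) iA add1n ltnS.
Qed.

Definition rentropy A : R := fine (entropy p A).

Lemma rentropyE A : entropy p A = (rentropy A)%:E.
Proof. by rewrite /rentropy fineK // entropy_fin_num. Qed.

Lemma le_rentropy S T : S \subset T -> rentropy S <= rentropy T.
Proof. by move=> ST; rewrite -lee_fin -!rentropyE le_entropy. Qed.

Lemma rentropy_submod S T :
  rentropy (S :|: T) + rentropy (S :&: T) <= rentropy S + rentropy T.
Proof. by rewrite -lee_fin !EFinD -!rentropyE entropy_submod. Qed.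

Definition rcondent C A : R := rentropy (A :|: C) - rentropy C.

Lemma condentE A C : condent p A C = (rcondent C A)%:E.
Proof. by rewrite /condent !rentropyE EFinB. Qed.

Lemma rcondent_set0 C : rcondent C finset.set0 = 0.
Proof. by rewrite /rcondent finset.set0U subrr. Qed.

Lemma le_rcondent C A B : A \subset B -> rcondent C A <= rcondent C B.
Proof. by move=> AB; rewrite lerD2r le_rentropy // finset.setSU. Qed.

Lemma rcondent_submod C A B :
  rcondent C (A :|: B) + rcondent C (A :&: B) <= rcondent C A + rcondent C B.
Proof.
have := rentropy_submod (A :|: C) (B :|: C).
rewrite -finset.setUUl -finset.setUIl /rcondent; lra.
Qed.

End Entropy.

Section Polymatroid.
Variables (R : realType) (n : nat) (h : {set 'I_n} -> R).
Hypothesis h0 : h finset.set0 = 0.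
Hypothesis hmono : forall A B : {set 'I_n}, A \subset B -> h A <= h B.
Hypothesis hsub : forall A B : {set 'I_n}, h (A :|: B) + h (A :&: B) <= h A + h B.
Implicit Types (A B J : {set 'I_n}) (Qs : seq {set 'I_n}).

Lemma h_ge0 A : 0 <= h A.
Proof. by rewrite -h0 hmono // finset.sub0set. Qed.

Lemma h_subadd A B : h (A :|: B) <= h A + h B.
Proof. by have := hsub A B; have := h_ge0 (A :&: B); lra. Qed.

Definition defect Qs := \sum_(Q <- Qs) h Q - h (\bigcup_(Q <- Qs) Q).

Lemma in_bigcup_seq (i : 'I_n) Qs :
  (i \in \bigcup_(Q <- Qs) Q) = has (fun Q : {set 'I_n} => i \in Q) Qs.
Proof.
elim: Qs => [|Q Qs IH]; first by rewrite big_nil finset.in_set0.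
by rewrite big_cons finset.in_setU IH.
Qed.

Lemma repeated_nil : repeated ([::] : seq {set 'I_n}) = finset.set0.
Proof. by apply/finset.setP => i; rewrite !finset.inE. Qed.

Lemma repeated_cons Q Qs :
  repeated (Q :: Qs) = repeated Qs :|: (Q :&: \bigcup_(P <- Qs) P).
Proof.
apply/finset.setP => i; rewrite !finset.inE in_bigcup_seq has_count /=.
by case: (i \in Q); case: (count _ Qs) => [|[|k]].
Qed.

Lemma repeated_le_defect Qs : h (repeated Qs) <= defect Qs.
Proof.
rewrite /defect; elim: Qs => [|Q Qs IH].
  by rewrite repeated_nil !big_nil h0 subrr.
rewrite repeated_cons !big_cons.
have := h_subadd (repeated Qs) (Q :&: \bigcup_(P <- Qs) P).
have := hsub Q (\bigcup_(P <- Qs) P); lra.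
Qed.

Lemma h_setD_null J A : h J = 0 -> h (A :\: J) = h A.
Proof.
move=> hJ; apply/eqP; rewrite eq_le hmono ?finset.subsetDl //=.
have sub : A \subset (A :\: J) :|: J.
  by apply/fintype.subsetP => i iA; rewrite !finset.inE iA; case: (i \in J).
by have := hmono sub; have := h_subadd (A :\: J) J; lra.
Qed.

Lemma setD_bigcup_seq J Qs :
  (\bigcup_(Q <- Qs) Q) :\: J = \bigcup_(Q <- [seq Q :\: J | Q <- Qs]) Q.
Proof.
elim: Qs => [|Q Qs IH]; first by rewrite !big_nil finset.set0D.
by rewrite /= !big_cons finset.setDUl IH.
Qed.

Lemma defect_reduced_parts Qs :
  h (repeated Qs) = 0 -> defect (reduced_parts Qs) = defect Qs.
Proof.
move=> hI; rewrite /defect /reduced_parts; set J := repeated Qs.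
have sumE : \sum_(P <- [seq P <- [seq Q :\: J | Q <- Qs] | P != finset.set0]) h P
    = \sum_(Q <- Qs) h Q.
  rewrite big_filter big_map big_mkcond /=; apply: eq_bigr => Q _.
  rewrite -(h_setD_null Q hI).
  by case: ifPn => // /negPn /eqP ->; rewrite h0.
have cupE : \bigcup_(P <- [seq P <- [seq Q :\: J | Q <- Qs] | P != finset.set0]) P
    = (\bigcup_(Q <- Qs) Q) :\: J.
  rewrite big_filter big_map big_mkcond /= setD_bigcup_seq big_map.
  by apply: eq_bigr => Q _; case: ifPn => // /negPn /eqP ->.
by rewrite sumE cupE h_setD_null.
Qed.

Lemma defect_pair J : defect [:: J; J] = h J.
Proof. by rewrite /defect !big_cons !big_nil finset.setU0 finset.setUid; lra. Qed.

Lemma defect_eq0 Qs :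
  defect Qs = 0 <->
  defect [:: repeated Qs; repeated Qs] = 0 /\ defect (reduced_parts Qs) = 0.
Proof.
rewrite defect_pair; split => [D0|[hI D0]]; last by rewrite -defect_reduced_parts.
have hI : h (repeated Qs) = 0.
  by apply/eqP; rewrite eq_le h_ge0 andbT -D0 repeated_le_defect.
by rewrite defect_reduced_parts.
Qed.

End Polymatroid.

Lemma cmi_validE (R : realType) n (p : outcome n -> R) (hp : is_pmf p)
  (hfin : forall i : 'I_n, (entropy p [set i] < +oo)%E) (C : {set 'I_n})
  (Qs : seq {set 'I_n}) :
  cmi_valid p C Qs <-> defect (rcondent p C) Qs = 0.
Proof.
rewrite /cmi_valid /defect.
rewrite (eq_bigr (fun Q => (rcondent p C Q)%:E)); last first.
  by move=> Q _; rewrite (condentE hp hfin).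
rewrite (condentE hp hfin) sumEFin -EFinB.
by split => [/eqP|->//]; rewrite eqe => /eqP.
Qed.

Theorem mainTheorem15 (R : realType) (n : nat) (p : outcome n -> R)
  (hp : is_pmf p)
  (hfin : forall i : 'I_n, (entropy p [set i] < +oo)%E)
  (C : {set 'I_n}) (Qs : seq {set 'I_n}) :
  pure_form C Qs ->
  (cmi_valid p C Qs <->
     cmi_valid p C [:: repeated Qs; repeated Qs] /\
     cmi_valid p C (reduced_parts Qs)).
Proof.
(* The equivalence holds for every CMI. *)
move=> _; rewrite !(cmi_validE hp hfin).
apply: defect_eq0.
- exact: rcondent_set0.
- exact: le_rcondent.
- exact: rcondent_submod.
Qed.
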